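(* Every $3\times3\times3$ quaternion tensor $T$ satisfies $\mathrm{rank}(T)\le6$.
   Context: $\mathbb{H}$ denotes the real quaternions. An $n_1\times n_2\times n_3$ quaternion tensor is an array $T=(T_{ijk})$ with entries in $\mathbb{H}$, $1\le i\le n_1$, $1\le j\le n_2$, $1\le k\le n_3$; it is written $T=(A_1;\dots;A_{n_2})$ where the frontal slice $A_j$ is the $n_1\times n_3$ matrix $(T_{ijk})_{i,k}$. A nonzero tensor is simple if $T_{ijk}=a_ib_jc_k$ (quaternion product in this order) for some $\vec a\in\mathbb{H}^{n_1},\vec b\in\mathbb{H}^{n_2},\vec c\in\mathbb{H}^{n_3}$. The rank of $T$ is the least number of simple tensors summing to $T$ (the zero tensor has rank $0$). *)

From mathcomp Require Import all_boot all_order all_algebra.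
From mathcomp Require Import reals.
Set Implicit Arguments. Unset Strict Implicit. Unset Printing Implicit Defensive.
Import Order.TTheory GRing.Theory Num.Theory.
Local Open Scope ring_scope.

(* a quaternion q0 + q1 i + q2 j + q3 k *)
Record quat (R : realType) := Quat { q0 : R; q1 : R; q2 : R; q3 : R }.

Definition qzero (R : realType) : quat R := Quat 0 0 0 0.

Definition qadd (R : realType) (x y : quat R) : quat R :=
  Quat (q0 x + q0 y) (q1 x + q1 y) (q2 x + q2 y) (q3 x + q3 y).

(* Hamilton product: i^2 = j^2 = k^2 = ijk = -1 *)
Definition qmul (R : realType) (x y : quat R) : quat R :=
  Quat (q0 x * q0 y - q1 x * q1 y - q2 x * q2 y - q3 x * q3 y)
       (q0 x * q1 y + q1 x * q0 y + q2 x * q3 y - q3 x * q2 y)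
       (q0 x * q2 y - q1 x * q3 y + q2 x * q0 y + q3 x * q1 y)
       (q0 x * q3 y + q1 x * q2 y - q2 x * q1 y + q3 x * q0 y).

Definition qtensor (R : realType) (n1 n2 n3 : nat) :=
  'I_n1 -> 'I_n2 -> 'I_n3 -> quat R.

Definition tzero (R : realType) n1 n2 n3 : qtensor R n1 n2 n3 :=
  fun _ _ _ => qzero R.

Definition tadd (R : realType) n1 n2 n3 (S T : qtensor R n1 n2 n3)
  : qtensor R n1 n2 n3 := fun i j k => qadd (S i j k) (T i j k).

Definition simple_tensor (R : realType) n1 n2 n3 (T : qtensor R n1 n2 n3) : Prop :=
  (exists i j k, T i j k <> qzero R) /\
  exists (a : 'I_n1 -> quat R) (b : 'I_n2 -> quat R) (c : 'I_n3 -> quat R),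
    forall i j k, T i j k = qmul (qmul (a i) (b j)) (c k).

Definition tsum (R : realType) n1 n2 n3 (s : seq (qtensor R n1 n2 n3)) :=
  foldr (@tadd R n1 n2 n3) (@tzero R n1 n2 n3) s.

Definition qrank_le (R : realType) n1 n2 n3 (T : qtensor R n1 n2 n3) (r : nat) : Prop :=
  exists s : seq (qtensor R n1 n2 n3),
    (size s <= r)%N /\ (forall l, (l < size s)%N -> simple_tensor (nth (@tzero R n1 n2 n3) s l)) /\
    forall i j k, T i j k = tsum s i j k.

From HB Require Import structures.
From mathcomp Require Import all_boot all_order all_algebra.
From mathcomp Require Import reals.
From mathcomp Require Import perm ring lra.
Set Implicit Arguments. Unset Strict Implicit. Unset Printing Implicit Defensive.
Import Order.TTheory GRing.Theory Num.Theory.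
Local Open Scope ring_scope.

(* Quaternions form a division ring, and over a division ring a square matrix
   is either left invertible or of deficient rank (Gaussian elimination).
   - If every slice has rank <= 2, each is a sum of two rank-one matrices and T
     is a sum of 3 * 2 simple tensors.
   - Otherwise some slice A_b has a left inverse B.  With N = A_a B and
     C = A_c B for the other two slices, the key fact is that every pair of
     3x3 quaternion matrices can be written C = X (N + t) + Y with t real and
     X, Y diagonalizable: after a real shift of N, elimination produces an
     upper triangular X with prescribed real diagonal (0, x1, x2) leaving a
     lower triangular residual Y; large x1, x2 make the diagonal entries of X,
     and those of Y, of pairwise different norms, and such triangular matrices
     are diagonalizable since a q - q b = c is solvable whenever |a| <> |b|.
     Multiplying back by A_b expresses the three slices through the same six
     rank-one matrices. *)

Section DivisionRingMatrices.
Variable D : unitRingType.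
Hypothesis nz_unit : forall x : D, x != 0 -> x \is a GRing.unit.

Definition left_invertible n (A : 'M[D]_n) := exists B : 'M[D]_n, B *m A = 1%:M.

Definition rank_deficient n (A : 'M[D]_n.+1) :=
  exists (U : 'M[D]_(n.+1, n)) (V : 'M[D]_(n, n.+1)), A = U *m V.

Lemma tperm_mxK n (i j : 'I_n) : tperm_mx i j *m tperm_mx i j = 1%:M :> 'M[D]_n.
Proof. by rewrite /tperm_mx -perm_mxM tperm2 perm_mx1. Qed.

Lemma left_invertible_xrow n (i j : 'I_n) (A : 'M[D]_n) :
  left_invertible (xrow i j A) -> left_invertible A.
Proof.
by case=> B BA1; exists (B *m tperm_mx i j); rewrite -mulmxA -xrowE.
Qed.

Lemma rank_deficient_xrow n (i j : 'I_n.+1) (A : 'M[D]_n.+1) :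
  rank_deficient (xrow i j A) -> rank_deficient A.
Proof.
case=> U [V eA]; exists (tperm_mx i j *m U), V.
by rewrite -mulmxA -eA xrowE mulmxA tperm_mxK mul1mx.
Qed.

(* A matrix whose first column vanishes only uses its last n columns. *)
Lemma col0_rank_deficient n (A : 'M[D]_(1 + n)) :
  (forall i, A i 0 = 0) -> rank_deficient A.
Proof.
move=> A_0; have eA : A = rsubmx A *m (row_mx 0 1%:M : 'M_(n, 1 + n)).
  rewrite mul_mx_row mulmx0 mulmx1 -{1}(hsubmxK A); congr row_mx.
  by apply/matrixP => i j; rewrite !mxE ord1 -(A_0 i); congr (A i _); apply: val_inj.
by exists (rsubmx A), (row_mx 0 1%:M : 'M_(n, 1 + n)).
Qed.

Section Pivot.
Variables (n : nat) (a : D) (r : 'rV[D]_n) (c : 'cV[D]_n) (E : 'M[D]_n).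
Hypothesis a_unit : a \is a GRing.unit.

(* Gaussian elimination on the pivot a: the block matrix [a r; c E] is
   governed by its Schur complement E - c a^-1 r. *)
Let S := E - c *m (a^-1%:M *m r).
Let aVa : a^-1%:M *m a%:M = 1%:M :> 'M[D]_1.
Proof. by rewrite -scalar_mxM mulVr. Qed.

Lemma schur_left_invertible :
  left_invertible S -> left_invertible (block_mx a%:M r c E).
Proof.
case=> B BS1.
have BE : B *m E = 1%:M + B *m (c *m (a^-1%:M *m r)).
  by apply/eqP; rewrite -subr_eq -mulmxBr BS1.
exists (block_mx (a^-1%:M + a^-1%:M *m r *m B *m c *m a^-1%:M) (- (a^-1%:M *m r *m B))
                 (- (B *m c *m a^-1%:M)) B).
rewrite mulmx_block [1%:M]scalar_mx_block; congr block_mx.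
- by rewrite mulmxDl !mulNmx -!mulmxA aVa mulmx1 addrK.
- by rewrite mulmxDl !mulNmx -!mulmxA BE !mulmxDr mulmx1 subrr.
- by rewrite !mulNmx -!mulmxA aVa mulmx1 addNr.
- by rewrite !mulNmx -!mulmxA BE addrC addrK.
Qed.

Lemma schur_factor (m : nat) (U : 'M[D]_(n, m)) (V : 'M[D]_(m, n)) :
  S = U *m V ->
  block_mx a%:M r c E = block_mx 1%:M 0 (c *m a^-1%:M) U *m block_mx a%:M r 0 V.
Proof.
move=> eS; rewrite mulmx_block !mul1mx !mul0mx !mulmx0 !addr0.
by rewrite -mulmxA aVa mulmx1 -eS /S -mulmxA addrC subrK.
Qed.

End Pivot.

Lemma left_invertible_or_deficient n (A : 'M[D]_n.+1) :
  left_invertible A \/ rank_deficient A.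
Proof.
elim: n A => [|n IH] A.
  have [A0|A0] := eqVneq (A 0 0) 0.
    right; exists 0, 0; apply/matrixP => i j.
    by rewrite !ord1 A0 mulmx0 mxE.
  left; exists (A 0 0)^-1%:M; apply/matrixP => i j.
  by rewrite !ord1 mul_scalar_mx !mxE mulr1n mulVr ?nz_unit.
have [p Ap0 | A_0] := pickP (fun i => A i 0 != 0); last first.
  by right; apply: col0_rank_deficient => i; apply/eqP/negbFE/A_0.
set A' : 'M[D]_(1 + n.+1) := xrow 0 p A.
have a_unit : A' 0 0 \is a GRing.unit by rewrite nz_unit // mxE tpermL.
have eA' : A' = block_mx (A' 0 0)%:M (ursubmx A') (dlsubmx A') (drsubmx A').
  rewrite -{1}(submxK A') [ulsubmx A']mx11_scalar; congr (block_mx _%:M _ _ _).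
  by rewrite [LHS]mxE [LHS]mxE; congr (A' _ _); apply: val_inj.
have [S_inv|[U [V eS]]] := IH (drsubmx A' - dlsubmx A' *m ((A' 0 0)^-1%:M *m ursubmx A')).
  by left; apply: (@left_invertible_xrow _ 0 p); rewrite -/A' eA'; apply: schur_left_invertible.
right; apply: (@rank_deficient_xrow _ 0 p); rewrite -/A' eA' (schur_factor a_unit eS).
by do 2 eexists.
Qed.

End DivisionRingMatrices.

Definition o0 : 'I_3 := @Ordinal 3 0 isT.
Definition o1 : 'I_3 := @Ordinal 3 1 isT.
Definition o2 : 'I_3 := @Ordinal 3 2 isT.

Lemma ord3P (i : 'I_3) : [\/ i = o0, i = o1 | i = o2].
Proof. by case: i => [[|[|[|//]]] ?]; [apply: Or31|apply: Or32|apply: Or33]; apply: val_inj. Qed.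

Lemma ord3_complement (jb : 'I_3) : exists ja jc : 'I_3,
  [/\ ja != jb, ja != jc, jb != jc & forall j, [\/ j = ja, j = jb | j = jc]].
Proof.
have [-> | -> | ->] := ord3P jb; [exists o1, o2 | exists o0, o2 | exists o0, o1];
  by split => // j; have [-> | -> | ->] := ord3P j; constructor.
Qed.

Ltac case3 i := case: (ord3P i) => ->.

Section ThreeByThree.
Variable Rg : pzRingType.

Lemma mulmx3E (A B : 'M[Rg]_3) i k :
  (A *m B) i k = A i o0 * B o0 k + A i o1 * B o1 k + A i o2 * B o2 k.
Proof.
rewrite mxE !big_ord_recl big_ord0 addr0 addrA.
by congr (_ * _ + _ * _ + _ * _); congr (_ _ _); apply: val_inj.
Qed.

Definition mx3 (f : nat -> nat -> Rg) : 'M[Rg]_3 := \matrix_(i, k) f i k.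

Lemma mx3E f i k : mx3 f i k = f i k. Proof. by rewrite mxE. Qed.

End ThreeByThree.

Ltac simp3 := rewrite ?mulmx3E ?mx3E ?mxE /= ?mulr0 ?mul0r ?mulr1 ?mul1r ?addr0 ?add0r.

Section TriangularSimilarity.
Variable Rg : pzRingType.

(* X = U diag(d) U' with U U' = 1; this one-sided form is all that rank
   bounds need: X A splits into the three rank-one terms U_l d_l (U' A)_l. *)
Definition diag_similar (X : 'M[Rg]_3) :=
  exists (U U' : 'M[Rg]_3) (d : 'rV[Rg]_3), U *m U' = 1%:M /\ X = U *m diag_mx d *m U'.

Definition sylvester_solvable (a b : Rg) := forall c, exists q, a * q - q * b = c.

(* An upper triangular matrix is diag_similar when the Sylvester equations
   between its diagonal entries are solvable: conjugation by a unipotent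
   upper triangular matrix clears the entries above the diagonal. *)
Lemma upper_diag_similar (X : 'M[Rg]_3) :
  X o1 o0 = 0 -> X o2 o0 = 0 -> X o2 o1 = 0 ->
  sylvester_solvable (X o0 o0) (X o1 o1) -> sylvester_solvable (X o0 o0) (X o2 o2) ->
  sylvester_solvable (X o1 o1) (X o2 o2) -> diag_similar X.
Proof.
move=> X10 X20 X21 syl01 syl02 syl12.
have [p Ep] := syl01 (- X o0 o1).
have [r Er] := syl12 (- X o1 o2).
have [q Eq] := syl02 (- (X o0 o1 * r + X o0 o2)).
pose U := mx3 (fun i k => match i, k with
  | 0, 0 | 1, 1 | 2, 2 => 1 | 0, 1 => p | 0, 2 => q | 1, 2 => r | _, _ => 0 end).
pose U' := mx3 (fun i k => match i, k with
  | 0, 0 | 1, 1 | 2, 2 => 1 | 0, 1 => - p | 0, 2 => p * r - q | 1, 2 => - r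
  | _, _ => 0 end).
pose d := \row_i X i i.
have UU' : U *m U' = 1%:M.
  apply/matrixP => i k; case3 i; case3 k; simp3 => //; rewrite ?addNr //.
  by rewrite mulrN addrAC subrK subrr.
have XU : X *m U = U *m diag_mx d.
  apply/matrixP => i k; rewrite mul_mx_diag [RHS]mxE.
  case3 i; case3 k; simp3; rewrite ?X10 ?X20 ?X21 ?mul0r ?addr0 ?add0r //.
  - by rewrite -[X o0 o1]opprK -Ep opprB addrC subrK.
  - by rewrite -addrA -[X o0 o1 * r + _]opprK -Eq opprB addrC subrK.
  - by rewrite -[X o1 o2]opprK -Er opprB addrC subrK.
by exists U, U', d; rewrite -XU -mulmxA UU' mulmx1.
Qed.

Definition antidiag : 'M[Rg]_3 := mx3 (fun i k => if (i + k == 2)%N then 1 else 0).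

Lemma antidiagK : antidiag *m antidiag = 1%:M.
Proof. by apply/matrixP => i k; case3 i; case3 k; rewrite /antidiag; simp3. Qed.

Lemma antidiag_conjE (Y : 'M[Rg]_3) i k :
  (antidiag *m Y *m antidiag) i k = Y (rev_ord i) (rev_ord k).
Proof.
have [r0 r1 r2] : [/\ rev_ord o0 = o2, rev_ord o1 = o1 & rev_ord o2 = o0].
  by split; apply: val_inj.
by case3 i; case3 k; rewrite ?r0 ?r1 ?r2 /antidiag; simp3.
Qed.

(* Lower triangular matrices reduce to the upper case by conjugating with J. *)
Lemma lower_diag_similar (Y : 'M[Rg]_3) :
  Y o0 o1 = 0 -> Y o0 o2 = 0 -> Y o1 o2 = 0 ->
  sylvester_solvable (Y o1 o1) (Y o0 o0) -> sylvester_solvable (Y o2 o2) (Y o0 o0) ->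
  sylvester_solvable (Y o2 o2) (Y o1 o1) -> diag_similar Y.
Proof.
move=> Y01 Y02 Y12 syl10 syl20 syl21.
have [r0 r1 r2] : [/\ rev_ord o0 = o2, rev_ord o1 = o1 & rev_ord o2 = o0].
  by split; apply: val_inj.
have [U [U' [d [UU' eJYJ]]]] : diag_similar (antidiag *m Y *m antidiag).
  by apply: upper_diag_similar; rewrite ?antidiag_conjE ?r0 ?r1 ?r2.
exists (antidiag *m U), (U' *m antidiag), d; split.
  by rewrite mulmxA -(mulmxA antidiag) UU' mulmx1 antidiagK.
have -> : Y = antidiag *m (antidiag *m Y *m antidiag) *m antidiag.
  by rewrite !mulmxA antidiagK mul1mx -mulmxA antidiagK mulmx1.
by rewrite eJYJ !mulmxA.
Qed.

Lemma mul_diag_mxE m n p (U : 'M[Rg]_(m, n)) (d : 'rV[Rg]_n) (W : 'M[Rg]_(n, p)) i k :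
  (U *m diag_mx d *m W) i k = \sum_l U i l * d 0 l * W l k.
Proof. by rewrite mxE; apply: eq_bigr => l _; rewrite mul_mx_diag mxE. Qed.

Lemma diag_const_mulmx m n (c : Rg) (A : 'M[Rg]_(m, n)) : diag_mx (const_mx c) *m A = c *: A.
Proof. by apply/matrixP => i k; rewrite mul_diag_mx !mxE. Qed.

End TriangularSimilarity.

Section Elimination.
Variable Rg : unitRingType.
Implicit Types (N C : 'M[Rg]_3).

Lemma mxsubE (A B : 'M[Rg]_3) i k : (A - B) i k = A i k - B i k.
Proof. by rewrite !mxE. Qed.

Definition schur_pivot N := N o1 o1 - N o1 o2 * (N o2 o2)^-1 * N o2 o1.

(* The upper triangular X with diagonal (0, x1, x2) for which C - X N is lower
   triangular: its off-diagonal entries solve X N = C above the diagonal by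
   back substitution, dividing by N22 and by the Schur complement. *)
Definition upper_solution N C (x1 x2 : Rg) : 'M[Rg]_3 :=
  let X01 := (C o0 o1 - C o0 o2 * (N o2 o2)^-1 * N o2 o1) / schur_pivot N in
  let X02 := (C o0 o2 - X01 * N o1 o2) / N o2 o2 in
  let X12 := (C o1 o2 - x1 * N o1 o2) / N o2 o2 in
  mx3 (fun i k => match i, k with
    | 0, 1 => X01 | 0, 2 => X02 | 1, 1 => x1 | 1, 2 => X12 | 2, 2 => x2 | _, _ => 0 end).

Lemma upper_solution_upper N C (x1 x2 : Rg) (X := upper_solution N C x1 x2) :
  [/\ X o1 o0 = 0, X o2 o0 = 0 & X o2 o1 = 0] /\
  [/\ X o0 o0 = 0, X o1 o1 = x1 & X o2 o2 = x2].
Proof. by rewrite /X /upper_solution; simp3. Qed.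

Lemma residual00 N C (x1 x2 : Rg) :
  (C - upper_solution N C x1 x2 *m N) o0 o0 = (C - upper_solution N C 0 0 *m N) o0 o0.
Proof. by rewrite !mxsubE !mulmx3E /upper_solution; simp3. Qed.

Lemma residual_lower N C (x1 x2 : Rg) (Y := C - upper_solution N C x1 x2 *m N) :
  N o2 o2 \is a GRing.unit -> schur_pivot N \is a GRing.unit ->
  [/\ Y o0 o1 = 0, Y o0 o2 = 0, Y o1 o2 = 0,
      Y o1 o1 = C o1 o1 - C o1 o2 * (N o2 o2)^-1 * N o2 o1 - x1 * schur_pivot N
    & Y o2 o2 = C o2 o2 - x2 * N o2 o2].
Proof.
move=> a_unit s_unit; rewrite /Y /upper_solution !mxsubE !mulmx3E; simp3.
set a := N o2 o2; set s := schur_pivot N.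
set X01 := (_ - _) / s; set X02 := (_ - _) / a; set X12 := (_ - _) / a.
have back z u : (z - u * N o1 o2) / a * N o2 o1 = z / a * N o2 o1 - u * (N o1 o2 / a * N o2 o1).
  by rewrite !mulrBl !mulrA.
have elim_row z u : u * N o1 o1 + (z - u * N o1 o2) / a * N o2 o1 = u * s + z / a * N o2 o1.
  by rewrite back addrA addrAC -mulrBr.
split.
- by rewrite /X02 elim_row /X01 divrK // (subrK (C o0 o2 / a * N o2 o1)) subrr.
- by rewrite /X02 divrK // subrKC subrr.
- by rewrite /X12 divrK // subrKC subrr.
- by rewrite /X12 elim_row opprD addrA addrAC.
- by [].
Qed.

End Elimination.

Lemma quat_eq (R : realType) (x y : quat R) :
  q0 x = q0 y -> q1 x = q1 y -> q2 x = q2 y -> q3 x = q3 y -> x = y.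
Proof. by case: x => ????; case: y => ???? /= -> -> -> ->. Qed.

Definition quat_to_tuple (R : realType) (q : quat R) := (q0 q, q1 q, q2 q, q3 q).
Definition tuple_to_quat (R : realType) (t : R * R * R * R) :=
  Quat t.1.1.1 t.1.1.2 t.1.2 t.2.
Lemma quat_to_tupleK (R : realType) : cancel (@quat_to_tuple R) (@tuple_to_quat R).
Proof. by case. Qed.
HB.instance Definition _ (R : realType) :=
  Choice.copy (quat R) (can_type (@quat_to_tupleK R)).

Ltac quat_ring := apply: quat_eq => /=; ring.

Definition qopp (R : realType) (x : quat R) : quat R :=
  Quat (- q0 x) (- q1 x) (- q2 x) (- q3 x).
Definition qone (R : realType) : quat R := Quat 1 0 0 0.

Section QuatAxioms.
Variable R : realType.
Lemma qaddA : associative (@qadd R). Proof. by move=> *; quat_ring. Qed.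
Lemma qaddC : commutative (@qadd R). Proof. by move=> *; quat_ring. Qed.
Lemma qadd0 : left_id (qzero R) (@qadd R). Proof. by move=> *; quat_ring. Qed.
Lemma qaddN : left_inverse (qzero R) (@qopp R) (@qadd R).
Proof. by move=> *; quat_ring. Qed.
Lemma qmulA : associative (@qmul R). Proof. by move=> *; quat_ring. Qed.
Lemma qmul1 : left_id (qone R) (@qmul R). Proof. by move=> *; quat_ring. Qed.
Lemma qmulr1 : right_id (qone R) (@qmul R). Proof. by move=> *; quat_ring. Qed.
Lemma qmulDl : left_distributive (@qmul R) (@qadd R).
Proof. by move=> *; quat_ring. Qed.
Lemma qmulDr : right_distributive (@qmul R) (@qadd R).
Proof. by move=> *; quat_ring. Qed.
Lemma qone_neq0 : qone R != qzero R.
Proof. by apply/eqP => /(congr1 (@q0 R)) /eqP; rewrite oner_eq0. Qed.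
End QuatAxioms.

HB.instance Definition _ (R : realType) :=
  GRing.isZmodule.Build (quat R) (@qaddA R) (@qaddC R) (@qadd0 R) (@qaddN R).
HB.instance Definition _ (R : realType) :=
  GRing.Zmodule_isNzRing.Build (quat R)
    (@qmulA R) (@qmul1 R) (@qmulr1 R) (@qmulDl R) (@qmulDr R) (@qone_neq0 R).

Lemma qaddE (R : realType) (x y : quat R) : x + y = qadd x y. Proof. by []. Qed.
Lemma qmulE (R : realType) (x y : quat R) : x * y = qmul x y. Proof. by []. Qed.
Lemma qoppE (R : realType) (x : quat R) : - x = qopp x. Proof. by []. Qed.
Lemma qzeroE (R : realType) : 0 = qzero R. Proof. by []. Qed.

Ltac qcoord := rewrite ?qaddE ?qmulE ?qoppE ?qzeroE; apply: quat_eq => /=.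

Definition qreal (R : realType) (x : R) : quat R := Quat x 0 0 0.
Definition qconj (R : realType) (q : quat R) : quat R :=
  Quat (q0 q) (- q1 q) (- q2 q) (- q3 q).
Definition qnorm (R : realType) (q : quat R) : R :=
  q0 q ^+ 2 + q1 q ^+ 2 + q2 q ^+ 2 + q3 q ^+ 2.
(* q^-1 = conj(q) / |q|^2, which is 0 at q = 0; locked so that rewriting
   never sees through the inverse *)
HB.lock Definition qinv (R : realType) (q : quat R) : quat R :=
  qmul (qreal (qnorm q)^-1) (qconj q).

Section QuatNorm.
Variable R : realType.
Local Notation H := (quat R).

Lemma qreal_central (x : R) (y : H) : qreal x * y = y * qreal x.
Proof. by qcoord; ring. Qed.
Lemma qrealM (x y : R) : qreal (x * y) = qreal x * qreal y. Proof. by qcoord; ring. Qed.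
Lemma qrealN (x : R) : qreal (- x) = - qreal x. Proof. by qcoord; ring. Qed.

Lemma qnorm_ge0 (q : H) : 0 <= qnorm q.
Proof. by rewrite /qnorm !addr_ge0 ?sqr_ge0. Qed.

Lemma qnorm_eq0 (q : H) : (qnorm q == 0) = (q == 0).
Proof.
apply/eqP/eqP => [nq0|->]; last by rewrite /qnorm /=; ring.
have := qnorm_ge0 q; rewrite /qnorm in nq0 * => _.
by qcoord; nra.
Qed.

Lemma qnorm_qreal (x : R) : qnorm (qreal x) = x ^+ 2.
Proof. by rewrite /qnorm /=; ring. Qed.

Lemma qnorm0 : qnorm (0 : H) = 0. Proof. by rewrite qnorm_qreal expr0n. Qed.

Lemma mul_qconj (q : H) : q * qconj q = qreal (qnorm q).
Proof. by rewrite /qnorm; qcoord; ring. Qed.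
Lemma mul_conjq (q : H) : qconj q * q = qreal (qnorm q).
Proof. by rewrite /qnorm; qcoord; ring. Qed.

Lemma qinvE (q : H) : qinv q = qreal (qnorm q)^-1 * qconj q.
Proof. by rewrite qinv.unlock. Qed.

Lemma qmulVq (q : H) : q != 0 -> qinv q * q = 1.
Proof.
by rewrite -qnorm_eq0 => nz; rewrite qinvE -mulrA mul_conjq -qrealM mulVf.
Qed.

Lemma qmulqV (q : H) : q != 0 -> q * qinv q = 1.
Proof.
rewrite -qnorm_eq0 => nz.
by rewrite qinvE qreal_central mulrA mul_qconj -qrealM mulfV.
Qed.

Lemma quat_invertible_neq0 (x y : H) : y * x = 1 /\ x * y = 1 -> x != 0.
Proof. by case=> yx1 _; apply/eqP => x0; move: yx1; rewrite x0 mulr0 => /esym/eqP; rewrite oner_eq0. Qed.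

Lemma qinv0 (q : H) : q = 0 -> qinv q = q.
Proof.
move=> ->.
by rewrite qinvE (_ : qconj 0 = 0) ?mulr0 //; qcoord; ring.
Qed.

End QuatNorm.

HB.instance Definition _ (R : realType) :=
  GRing.NzRing_hasMulInverse.Build (quat R)
    (fun q (nz : q \in predC1 0) => @qmulVq R q nz)
    (fun q (nz : q \in predC1 0) => @qmulqV R q nz)
    (fun x y inv_xy => (@quat_invertible_neq0 R x y inv_xy : x \in predC1 0))
    (fun q (z : q \in [predC predC1 0]) => @qinv0 R q (eqP (negbNE z))).

Lemma quat_unitE (R : realType) (q : quat R) : (q \is a GRing.unit) = (q != 0).
Proof. by []. Qed.

Section Sylvester.
Variable R : realType.
Local Notation H := (quat R).

(* The characteristic polynomial of b, x^2 - 2 Re(b) x + |b|^2, evaluated at a.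
   It commutes with a and satisfies P(a) c = a z - z b for z = a c - c conj(b). *)
Definition sylvester_poly (a b : H) : H :=
  a * a - qreal (2 * q0 b) * a + qreal (qnorm b).

(* If P(a) = 0, the quaternion a satisfies the real quadratic equation of b,
   which forces |a| = |b|. *)
Lemma sylvester_poly_neq0 (a b : H) : qnorm a != qnorm b -> sylvester_poly a b != 0.
Proof.
apply: contraNneq; rewrite /sylvester_poly /qnorm ?qaddE ?qmulE ?qoppE /=.
move=> /(congr1 (@quat_to_tuple R)) [h0 h1 h2 h3].
have [e|ne] := eqVneq (q0 a) (q0 b); first by rewrite e in h0 *; apply/eqP; nra.
have im0 : q1 a = 0 /\ q2 a = 0 /\ q3 a = 0.
  have cancel x : (q0 a - q0 b) * x = 0 -> x = 0.
    by move/eqP; rewrite mulf_eq0 subr_eq0 (negbTE ne) => /eqP.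
  by split; [|split]; apply: cancel; nra.
by case: im0 => [e1 [e2 e3]]; rewrite e1 e2 e3 in h0 *; apply/eqP; nra.
Qed.

Lemma quat_sylvester (a b : H) : qnorm a != qnorm b -> sylvester_solvable a b.
Proof.
move=> /sylvester_poly_neq0; set P := sylvester_poly a b => nzP c.
have commP : GRing.comm a P^-1.
  by apply: commrV; rewrite /P /sylvester_poly /GRing.comm; qcoord; ring.
have key : a * (a * c - c * qconj b) - (a * c - c * qconj b) * b = P * c.
  by rewrite /P /sylvester_poly /qnorm; qcoord; ring.
exists (P^-1 * (a * c - c * qconj b)).
by rewrite mulrA commP -!mulrA -mulrBr key mulKr ?quat_unitE.
Qed.

End Sylvester.

Section KeyDecomposition.
Variable R : realType.
Local Notation H := (quat R).

Lemma cubic_dominates (n22 n11 k0 k1 : R) : exists t : R,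
  [/\ 0 < n22 + t, 0 < n11 + t & k0 + t * k1 < (n22 + t) ^+ 2 * (n11 + t)].
Proof.
pose m := 3 + `|n22| + `|n11| + `|k0| + `|k1|.
have [b22 b11 bk0 bk1] : [/\ `|n22| <= m - 3, `|n11| <= m - 3, `|k0| <= m - 3 & `|k1| <= m - 3].
  by rewrite /m; split; have := normr_ge0 n22; have := normr_ge0 n11;
    have := normr_ge0 k0; have := normr_ge0 k1; lra.
have [l22 l11 lk0 lk1] : [/\ - n22 <= `|n22|, - n11 <= `|n11|, k0 <= `|k0| & k1 <= `|k1|].
  by split; rewrite ?ler_norm // -normrN ler_norm.
have m3 : 3 <= m by have := normr_ge0 n22; lra.
exists (2 * m); split; [lra | lra |].
have a_ge : m <= n22 + 2 * m by lra.
have d_ge : m <= n11 + 2 * m by lra.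
have cube : m ^+ 2 * m <= (n22 + 2 * m) ^+ 2 * (n11 + 2 * m).
  by apply: ler_pM; rewrite ?sqr_ge0 ?lerXn2r ?nnegrE //; lra.
have lin : k0 + 2 * m * k1 <= m + 2 * m * m by rewrite lerD ?ler_wpM2l //; lra.
by apply: le_lt_trans lin _; apply: lt_le_trans cube; nra.
Qed.

(* |z - x q|^2 is a quadratic in the real x with positive leading coefficient
   |q|^2, so it exceeds any bound for x large. *)
Lemma qnorm_grows (z q : H) (v x0 : R) :
  q != 0 -> exists x, x0 <= x /\ v < qnorm (z - qreal x * q).
Proof.
rewrite -qnorm_eq0 => nq0; have Q_gt0 : 0 < qnorm q by rewrite lt_def nq0 qnorm_ge0.
set Q := qnorm q; set P := q0 z * q0 q + q1 z * q1 q + q2 z * q2 q + q3 z * q3 q.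
have expand x : qnorm (z - qreal x * q) = x ^+ 2 * Q - 2 * x * P + qnorm z.
  by rewrite /Q /P /qnorm /=; ring.
pose x := 1 + `|x0| + (2 * `|P| + `|v|) / Q.
have big : 2 * `|P| + `|v| <= (x - 1) * Q.
  have e : (2 * `|P| + `|v|) / Q * Q = 2 * `|P| + `|v| by rewrite mulfVK ?gt_eqF.
  have : 0 <= `|x0| * Q by rewrite mulr_ge0 // ltW.
  rewrite /x; lra.
have D_ge0 : 0 <= (2 * `|P| + `|v|) / Q.
  by apply: divr_ge0; [apply: addr_ge0; [apply: mulr_ge0|] | apply: ltW].
have x_ge1 : 1 <= x by rewrite /x; have := normr_ge0 x0; lra.
exists x; rewrite expand; split; first by rewrite /x; have := ler_norm x0; lra.
have [lP lv] : P <= `|P| /\ v <= `|v| by rewrite !ler_norm.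
have xxQ : x * (2 * `|P| + `|v| + Q) <= x * (x * Q) by rewrite ler_wpM2l; lra.
have xP : x * P <= x * `|P| by rewrite ler_wpM2l //; lra.
have xv : `|v| <= x * `|v| by rewrite ler_peMl.
have := qnorm_ge0 z; have : 0 < x * Q by rewrite mulr_gt0 //; lra.
nra.
Qed.

(* Clearing the denominator of a Schur complement: |a|^2 a^-1 = conj(a). *)
Lemma qnorm_mul_schur (a b c d : H) : a != 0 ->
  qreal (qnorm a) * (d - b * a^-1 * c) = qreal (qnorm a) * d - b * qconj a * c.
Proof.
move=> a_nz; have na : qreal (qnorm a) * a^-1 = qconj a.
  by rewrite -mul_conjq mulrK // quat_unitE.
by rewrite mulrBr !mulrA (qreal_central _ b) -(mulrA b (qreal _)) na.
Qed.

(* A large real shift of the diagonal of N makes both pivots of the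
   elimination (N22 and its Schur complement) nonzero: the real part of
   |a|^2 times the Schur complement is a cubic in the shift. *)
Lemma shift_pivots (N : 'M[H]_3) : exists t : R,
  (N + (qreal t)%:M) o2 o2 != 0 /\ schur_pivot (N + (qreal t)%:M) != 0.
Proof.
set n22 := N o2 o2; set n11 := N o1 o1; set b := N o1 o2; set c := N o2 o1.
have [t [a_pos d_pos dominated]] :=
  cubic_dominates (q0 n22) (q0 n11) (q0 (b * qconj n22 * c)) (q0 (b * c)).
exists t; rewrite /schur_pivot !mxE /= !mulr1n !mulr0n !addr0 -/n22 -/n11 -/b -/c.
set a := n22 + qreal t.
have a_nz : a != 0 by apply/eqP => /(congr1 (@q0 R)) /= a0; move: a_pos; rewrite a0 ltxx.
split => //; apply/eqP => /(congr1 (fun s => q0 (qreal (qnorm a) * s))).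
have real_part : q0 (qreal (qnorm a) * (n11 + qreal t) - b * qconj a * c)
    = qnorm a * (q0 n11 + t) - (q0 (b * qconj n22 * c) + t * q0 (b * c)).
  by rewrite /a /qnorm ?qmulE ?qaddE ?qoppE /=; ring.
rewrite qnorm_mul_schur // mulr0 real_part (_ : q0 0 = 0) // => cubic0.
have re_le : (q0 n22 + t) ^+ 2 <= qnorm a.
  by rewrite /qnorm /= -!addrA lerDl !addr_ge0 ?sqr_ge0.
have : (q0 n22 + t) ^+ 2 * (q0 n11 + t) <= qnorm a * (q0 n11 + t).
  by rewrite ler_wpM2r // ltW.
lra.
Qed.

Lemma sqr_lt_shift (x2 x1 : R) : 1 <= x2 -> x2 + 1 <= x1 -> 0 < x2 ^+ 2 /\ x2 ^+ 2 < x1 ^+ 2.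
Proof. by move=> x2_ge1 x1_ge; split; [rewrite exprn_gt0 | rewrite ltrXn2r // ?nnegrE]; lra. Qed.

(* Every pair (N, C) admits C = X (N + t) + Y with X, Y diag_similar: shift N
   so that elimination works, choose the real diagonal (0, x1, x2) of the upper
   triangular X so that the lower triangular residual Y has diagonal entries of
   strictly increasing norms, and diagonalize both by Sylvester's criterion. *)
Lemma split_diag_similar (N C : 'M[H]_3) : exists (t : R) (X Y : 'M[H]_3),
  [/\ diag_similar X, diag_similar Y & C = X *m (N + (qreal t)%:M) + Y].
Proof.
have [t [a_nz s_nz]] := shift_pivots N.
set N' := N + _ in a_nz s_nz *; exists t.
set a := N' o2 o2 in a_nz; set s := schur_pivot N' in s_nz.
set y0 := (C - upper_solution N' C 0 0 *m N') o0 o0.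
have [x2 [x2_ge1 norm02]] := qnorm_grows (C o2 o2) (qnorm y0) 1 a_nz.
have [x1 [x1_ge norm21]] := qnorm_grows (C o1 o1 - C o1 o2 * a^-1 * N' o2 o1)
  (qnorm (C o2 o2 - qreal x2 * a)) (x2 + 1) s_nz.
set X := upper_solution N' C (qreal x1) (qreal x2); set Y := C - X *m N'.
have [[X10 X20 X21] [X00 X11 X22]] := upper_solution_upper N' C (qreal x1) (qreal x2).
have [Y01 Y02 Y12 Y11 Y22] : [/\ Y o0 o1 = 0, Y o0 o2 = 0, Y o1 o2 = 0,
    Y o1 o1 = C o1 o1 - C o1 o2 * a^-1 * N' o2 o1 - qreal x1 * s
  & Y o2 o2 = C o2 o2 - qreal x2 * a] := residual_lower C (qreal x1) (qreal x2) a_nz s_nz.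
have Y00 : Y o0 o0 = y0 := residual00 N' C (qreal x1) (qreal x2).
have [x2_pos x21] := sqr_lt_shift x2_ge1 x1_ge.
exists X, Y; split; last by rewrite subrKC.
  apply: (upper_diag_similar X10 X20 X21); apply: quat_sylvester.
  - by rewrite X00 X11 qnorm0 qnorm_qreal (lt_eqF (lt_trans x2_pos x21)).
  - by rewrite X00 X22 qnorm0 qnorm_qreal (lt_eqF x2_pos).
  - by rewrite X11 X22 !qnorm_qreal (gt_eqF x21).
apply: (lower_diag_similar Y01 Y02 Y12); apply: quat_sylvester.
- by rewrite Y11 Y00 (gt_eqF (lt_trans norm02 norm21)).
- by rewrite Y22 Y00 (gt_eqF norm02).
- by rewrite Y22 Y11 (lt_eqF norm21).
Qed.

End KeyDecomposition.

Section Tensors.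
Variable R : realType.
Local Notation H := (quat R).

Definition triple n1 n2 n3 := (('I_n1 -> H) * ('I_n2 -> H) * ('I_n3 -> H))%type.
Definition triple_tensor n1 n2 n3 (x : triple n1 n2 n3) : qtensor R n1 n2 n3 :=
  fun i j k => x.1.1 i * x.1.2 j * x.2 k.

Lemma tsumE n1 n2 n3 (s : seq (qtensor R n1 n2 n3)) i j k :
  tsum s i j k = \sum_(t <- s) t i j k.
Proof. by elim: s => [|t s IH] /=; rewrite ?big_nil // big_cons -IH. Qed.

(* A tensor written as a sum of m triple products has rank at most m: the
   nonzero terms are simple tensors and the zero terms can be dropped. *)
Lemma qrank_le_triples n1 n2 n3 (T : qtensor R n1 n2 n3) (s : seq (triple n1 n2 n3)) :
  (forall i j k, T i j k = \sum_(x <- s) triple_tensor x i j k) -> qrank_le T (size s).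
Proof.
move=> eT; pose nz (t : qtensor R n1 n2 n3) := [exists i, exists j, exists k, t i j k != 0].
exists [seq triple_tensor x | x <- s & nz (triple_tensor x)]; split; [|split].
- by rewrite size_map size_filter count_size.
- move=> l; rewrite size_map => ls.
  pose x0 : triple n1 n2 n3 := (fun _ => 0, fun _ => 0, fun _ => 0).
  have := all_nthP x0 (filter_all (fun x => nz (triple_tensor x)) s) l ls.
  rewrite (nth_map x0) //; set x := nth _ _ _ => /existsP [i /existsP [j /existsP [k /eqP t_nz]]].
  by split; [exists i, j, k | exists x.1.1, x.1.2, x.2].
- move=> i j k; rewrite tsumE eT big_map big_filter [RHS]big_mkcond /=.
  apply: eq_bigr => x _; case: ifP => // /negbT; rewrite negb_exists => /forallP /(_ i).
  by rewrite negb_exists => /forallP /(_ j); rewrite negb_exists => /forallP /(_ k) /negPn /eqP.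
Qed.

Definition slice n1 n2 n3 (T : qtensor R n1 n2 n3) (j : 'I_n2) : 'M[H]_(n1, n3) :=
  \matrix_(i, k) T i j k.

(* If every slice factors through rank r, the tensor has rank at most n2 r:
   each slice U_j V_j = sum_m U_j[:, m] V_j[m, :] contributes r simple terms
   with middle vector the indicator of j. *)
Lemma qrank_le_factored_slices n1 n2 n3 r (T : qtensor R n1 n2 n3) :
  (forall j, exists UV : 'M[H]_(n1, r) * 'M[H]_(r, n3), slice T j = UV.1 *m UV.2) ->
  qrank_le T (n2 * r).
Proof.
move=> /fin_all_exists [UV eUV].
pose term (p : 'I_n2 * 'I_r) : triple n1 n2 n3 :=
  (fun i => (UV p.1).1 i p.2, fun j => (j == p.1)%:R, fun k => (UV p.1).2 p.2 k).
have -> : (n2 * r = size [seq term p | p <- [seq (j, m) | j <- enum 'I_n2, m <- enum 'I_r]])%N.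
  by rewrite size_map size_allpairs !size_enum_ord.
apply: qrank_le_triples => i j k; rewrite big_map big_allpairs.
rewrite (bigD1_seq j) ?mem_enum ?enum_uniq //= [X in _ + X]big1_seq ?addr0.
  have -> : T i j k = slice T j i k by rewrite mxE.
  rewrite eUV mxE big_enum /=.
  by apply: eq_bigr => m _; rewrite /triple_tensor /= eqxx mulr1.
move=> j' /andP [j'j _]; rewrite big1 // => m _.
by rewrite /triple_tensor /= eq_sym (negbTE j'j) mulr0 mul0r.
Qed.

End Tensors.

Section ThreeSlices.
Variable R : realType.
Local Notation H := (quat R).

(* Real scalars are central, so they can be pulled out of a matrix product. *)
Lemma mulmx_qrealZ m n p (x : R) (A : 'M[H]_(m, n)) (B : 'M[H]_(n, p)) :
  A *m (qreal x *: B) = qreal x *: (A *m B).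
Proof.
apply/matrixP => i k; rewrite !mxE mulr_sumr; apply: eq_bigr => l _.
by rewrite mxE mulrA -qreal_central mulrA.
Qed.

Definition diag_terms (Q : 'M[H]_3) (coef : 'I_3 -> 'rV[H]_3) (Z : 'M[H]_3) :
    seq (triple R 3 3 3) :=
  [seq ((fun i => Q i l), (fun j => coef j 0 l), (fun k => Z l k)) | l <- enum 'I_3].

(* If some slice A_b has a left inverse B, write N = A_a B and C = A_c B as
   C = X (N + t) + Y with X = U diag(d) U', Y = V diag(e) V'.  Multiplying by
   A_b gives, with K = A_a + t A_b,
     A_a = U U' K - t V V' A_b,  A_b = V V' A_b,  A_c = U diag(d) U' K + V diag(e) V' A_b,
   i.e. all three slices are combinations of the same six rank-one matrices. *)
Lemma qrank_le_left_invertible_slice (T : qtensor R 3 3 3) (jb : 'I_3) :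
  left_invertible (slice T jb) -> qrank_le T 6.
Proof.
move=> [B BAb]; have [ja [jc [ab ac bc cover]]] := ord3_complement jb.
have [t [X [Y [[U [U' [d [UU' eX]]]] [V [V' [e [VV' eY]]]] eC]]]] :=
  split_diag_similar (slice T ja *m B) (slice T jc *m B).
set K := slice T ja + qreal t *: slice T jb.
have eK : (slice T ja *m B + (qreal t)%:M) *m slice T jb = K.
  by rewrite mulmxDl -mulmxA BAb mulmx1 mul_scalar_mx.
pose W := U' *m K; pose W' := V' *m slice T jb.
pose coef1 j : 'rV[H]_3 := if j == ja then const_mx 1 else if j == jb then const_mx 0 else d.
pose coef2 j : 'rV[H]_3 :=
  if j == ja then const_mx (qreal (- t)) else if j == jb then const_mx 1 else e.
have slices j : slice T j = U *m diag_mx (coef1 j) *m W + V *m diag_mx (coef2 j) *m W'.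
  have [ba ca cb] : [/\ jb == ja = false, jc == ja = false & jc == jb = false].
    by split; apply/negbTE; rewrite eq_sym.
  case: (cover j) => ->; rewrite /coef1 /coef2 ?eqxx ?ba ?ca ?cb -!mulmxA ?diag_const_mulmx.
  - rewrite scale1r mulmx_qrealZ !mulmxA UU' VV' !mul1mx.
    by rewrite qrealN scaleNr /K addrK.
  - by rewrite scale0r scale1r mulmx0 add0r mulmxA VV' mul1mx.
  - by rewrite !mulmxA -eX -eY -eK mulmxA -mulmxDl -eC -mulmxA BAb mulmx1.
have -> : 6%N = size (diag_terms U coef1 W ++ diag_terms V coef2 W').
  by rewrite size_cat !size_map -enumT size_enum_ord.
apply: qrank_le_triples => i j k.
have -> : T i j k = slice T j i k by rewrite mxE.
rewrite slices mxE !mul_diag_mxE big_cat !big_map -enumT !big_enum.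
by congr (_ + _); apply: eq_bigr.
Qed.

End ThreeSlices.

Theorem mainTheorem16 (R : realType) (T : qtensor R 3 3 3) : qrank_le T 6.
Proof.
have quat_nz_unit (x : quat R) : x != 0 -> x \is a GRing.unit by rewrite quat_unitE.
have [[j inv_j] | deficient] :
    (exists j, left_invertible (slice T j)) \/ forall j, rank_deficient (slice T j).
  have inv_or_def j := left_invertible_or_deficient quat_nz_unit (slice T j).
  case: (inv_or_def o0) (inv_or_def o1) (inv_or_def o2) => [?|?] [?|?] [?|?];
    first [by left; exists o0 | by left; exists o1 | by left; exists o2 |
           by right => j; have [-> | -> | ->] := ord3P j].
  by apply: qrank_le_left_invertible_slice inv_j.
apply: (@qrank_le_factored_slices R 3 3 3 2) => j.
by have [U [V eUV]] := deficient j; exists (U, V).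
Qed.
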